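(* Let $b\in B(-\infty)$ with $\varphi_0(b)=0$. Then $\mathbf c^\ell_{\alpha_0}(MV_{\sigma_0(b)})=0$. Moreover, $\mathbf c^\ell_\alpha(MV_{\sigma_0(b)})=\mathbf c^r_{s_0\alpha}(MV_b)$ for every positive real root $\alpha\neq\alpha_0$. The imaginary parts also agree: $\mathbf c^\ell_\delta(MV_{\sigma_0(b)})=\mathbf c^r_\delta(MV_b)$.
   Context: **Setup.** Let $\mathfrak g$ be $\widehat{\mathfrak{sl}}_2$ or $A_2^{(2)}$, with Dynkin nodes $0,1$. For $A_2^{(2)}$, node $0$ is the long root. The simple roots $\alpha_0,\alpha_1$ lie in a 3-dimensional real space. This space carries a nondegenerate symmetric form $(\cdot,\cdot)$ with $(\alpha_i,\alpha_j)=N_{ij}$, where - $N=\begin{pmatrix}2&-2\\-2&2\end{pmatrix}$ for $\widehat{\mathfrak{sl}}_2$, - $N=\begin{pmatrix}8&-4\\-4&2\end{pmatrix}$ for $A_2^{(2)}$. Write $|\alpha|=\sqrt{(\alpha,\alpha)}$. Put $\delta=\alpha_0+\alpha_1$ for $\widehat{\mathfrak{sl}}_2$ and $\delta=\alpha_0+2\alpha_1$ for $A_2^{(2)}$. Fix $\omega_0,\omega_1$ with $(\alpha_i,\omega_j)=\delta_{ij}$. Let $s_0,s_1$ be the simple reflections. The positive real roots are: - for $\widehat{\mathfrak{sl}}_2$: $\alpha_0+k\delta$ and $\alpha_1+k\delta$ ($k\ge0$); - for $A_2^{(2)}$: $\alpha_1+k\delta$, $\alpha_0+2k\delta$, $\alpha_0+\alpha_1+k\delta$,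 $2\alpha_1+(2k+1)\delta$ ($k\ge0$). The positive imaginary roots are $k\delta$, $k\ge1$. Label the positive real roots $\beta_k,\beta^k$ ($k\ge1$): - for $\widehat{\mathfrak{sl}}_2$: $\beta_k=\alpha_1+(k-1)\delta$ and $\beta^k=\alpha_0+(k-1)\delta$; - for $A_2^{(2)}$: $\beta_k=\alpha_1+\frac{k-1}{2}\delta$ ($k$ odd), $\beta_k=2\alpha_1+(k-1)\delta$ ($k$ even); $\beta^k=\alpha_0+(k-1)\delta$ ($k$ odd), $\beta^k=\alpha_0+\alpha_1+\frac{k-2}{2}\delta$ ($k$ even). **Lusztig data and pseudo-Weyl polytopes.** A Lusztig datum $\mathbf c$ consists of a nonnegative integer $\mathbf c_\beta$ for each positive real root $\beta$ (all but finitely many zero), together with a partition $\mathbf c_\delta$. Its weight is $|\mathbf c_\delta|\delta+\sum_\beta \mathbf c_\beta\beta$. A decorated pseudo-Weyl polytope $P$ is a pair $(\mathbf c^\ell(P),\mathbf c^r(P))$ of Lusztig data of equal weight $\mathrm{wt}(P)$. Its vertices are defined as follows: - $\mu^r_0=\mu^\ell_0=0$; - $\mu^r_k=\mu^r_{k-1}+\mathbf c^r_{\beta_k}\beta_k$ and $\mu^\ell_k=\mu^\ell_{k-1}+\mathbf c^\ell_{\beta^k}\beta^k$; - $\mu^{r,0}=\mu^{\ell,0}=\mathrm{wt}(P)$; - $\mu^{r,k}=\mu^{r,k-1}-\mathbf c^r_{\beta^k}\beta^k$ and $\mu^{\ell,k}=\mu^{\ell,k-1}-\mathbf c^\ell_{\beta_k}\beta_k$.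 Let $\mu^r_\infty,\mu^{r,\infty},\mu^\ell_\infty,\mu^{\ell,\infty}$ denote the eventually constant values of these sequences. **MV polytopes.** $P$ is an MV polytope if the following four conditions hold. 1. For all $k\ge2$: $\max\{(\mu^\ell_k-\mu^r_{k-1},\omega_1),(\mu^r_k-\mu^\ell_{k-1},\omega_0)\}=0$. 2. For all $k\ge2$: $\min\{(\mu^{\ell,k}-\mu^{r,k-1},\omega_0),(\mu^{r,k}-\mu^{\ell,k-1},\omega_1)\}=0$. 3. If $\mu^r_\infty-\mu^\ell_\infty$ and $\mu^{r,\infty}-\mu^{\ell,\infty}$ are parallel, then $\mathbf c^r_\delta=\mathbf c^\ell_\delta$. Otherwise one of $\mathbf c^r_\delta,\mathbf c^\ell_\delta$ is obtained from the other by removing a part of size $\frac{|\alpha_1|}{2|\alpha_0|}(\mu^r_\infty-\mu^\ell_\infty,\alpha_1)$. 4. The largest parts of $\mathbf c^r_\delta$ and $\mathbf c^\ell_\delta$ are both $\le\frac{|\alpha_1|}{2|\alpha_0|}(\mu^r_\infty-\mu^\ell_\infty,\alpha_1)$. By Baumann–Dunlap–Kamnitzer–Tingley (BDKT), for each Lusztig datum $\mathbf c$ there is exactly one MV polytope with right datum $\mathbf c$, and exactly one with left datum $\mathbf c$. Define operators on MV polytopes: - $\tilde e_0P$ is the MV polytope whose right datum is $\mathbf c^r(P)$ with $\mathbf c^r_{\alpha_0}$ increased by $1$; - $\tilde e_1P$ is the MV polytope whose left datum is $\mathbf c^\ell(P)$ with $\mathbf c^\ell_{\alpha_1}$ increased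 by $1$; - $\tilde f_0,\tilde f_1$ decrease these entries instead, giving $\emptyset$ if the entry is $0$. By BDKT, the set of MV polytopes with these operators is a crystal isomorphic to $B(-\infty)$. For $b\in B(-\infty)$, $MV_b$ denotes the MV polytope corresponding to $b$. **Crystal notation.** $B(-\infty)$ is Kashiwara's crystal of $U_q^+(\mathfrak g)$ (lowest weight $b_0$, operators $\tilde e_i,\tilde f_i$, weight map $\mathrm{wt}$). Define $\varphi_i(b)=\max\{n:\tilde f_i^nb\ne\emptyset\}$ and $\varepsilon_i(b)=\varphi_i(b)-\langle\alpha_i^\vee,\mathrm{wt} b\rangle$. Let $*$ be Kashiwara's involution. Set $\tilde e_i^*=*\tilde e_i*$, $\tilde f_i^*=*\tilde f_i*$, $\varphi_i^*=\varphi_i\circ*$ and $\varepsilon_i^*=\varepsilon_i\circ*$. For $g\in\{\tilde f_i,\tilde f_i^*\}$, $g^{\max}x$ means $g^mx$ with $m$ maximal such that $g^mx\ne\emptyset$. **Saito reflections (convention used here).** For $b$ with $\varphi_i(b)=0$, set $\sigma_i(b):=(\tilde f_i^* )^{\max}\tilde e_i^{\,N}b$ for any $N\ge\varepsilon_i^*(b)$; this is independent of $N$. For $b$ with $\varphi_i^*(b)=0$, set $\sigma_i^*(b):=*\sigma_i( *b)=\tilde f_i^{\max}(\tilde e_i^* )^Nb$ for $N\ge\varepsilon_i(b)$. *)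

From HB Require Import structures.
From mathcomp Require Import all_boot all_order all_algebra.
From Stdlib Require Import ClassicalEpsilon.
Set Implicit Arguments. Unset Strict Implicit. Unset Printing Implicit Defensive.
Import Order.TTheory GRing.Theory Num.Theory.
Local Open Scope ring_scope.

Inductive afftype := SL2 | A22 (* A_2^{(2)}, node 0 long *).

(* Weights in the root lattice Z alpha_0 + Z alpha_1, given by their
   coordinates (a0, a1) : mu = a0 alpha_0 + a1 alpha_1.  All vertices of
   pseudo-Weyl polytopes lie in this lattice. *)
Definition weight := (int * int)%type.
Definition wzero : weight := (0, 0).
Definition wadd (u v : weight) : weight := (u.1 + v.1, u.2 + v.2).
Definition wsub (u v : weight) : weight := (u.1 - v.1, u.2 - v.2).
Definition wscale (n : nat) (u : weight) : weight := (n%:Z * u.1, n%:Z * u.2).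

Definition alpha0 : weight := (1, 0).
Definition alpha1 : weight := (0, 1).
Definition delta (t : afftype) : weight :=
  match t with SL2 => (1, 1) | A22 => (1, 2) end.

(* (mu, omega_0) and (mu, omega_1) *)
Definition pw0 (u : weight) : int := u.1.
Definition pw1 (u : weight) : int := u.2.
(* (mu, alpha_1) via the matrix N *)
Definition pa1 (t : afftype) (u : weight) : int :=
  match t with SL2 => -2 * u.1 + 2 * u.2 | A22 => -4 * u.1 + 2 * u.2 end.
(* <alpha_0^vee, mu> = 2 (alpha_0, mu) / (alpha_0, alpha_0) *)
Definition ca0 (t : afftype) (u : weight) : int :=
  match t with SL2 => 2 * u.1 - 2 * u.2 | A22 => 2 * u.1 - u.2 end.
(* d = 2|alpha_0| / |alpha_1|, so that |alpha_1|/(2|alpha_0|) x = x / d *)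
Definition dfac (t : afftype) : int := match t with SL2 => 2 | A22 => 4 end.
Definition s0 (t : afftype) (u : weight) : weight := (u.1 - ca0 t u, u.2).

(* betaB t i = beta_{i+1},  betaT t i = beta^{i+1} *)
Definition betaB (t : afftype) (i : nat) : weight :=
  match t with
  | SL2 => ((i : int), (i.+1 : int))
  | A22 => if odd i then ((i : int), ((2 * i + 2)%N : int))
           else (((i./2)%N : int), ((i.+1)%N : int))
  end.
Definition betaT (t : afftype) (i : nat) : weight :=
  match t with
  | SL2 => ((i.+1 : int), (i : int))
  | A22 => if odd i then ((i.+1./2)%N : int, (i : int))
           else ((i.+1 : int), ((2 * i)%N : int))
  end.

(* Labels of positive real roots: LB i = beta_{i+1}, LT i = beta^{i+1}. *)
Inductive rlabel := LB of nat | LT of nat.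
Definition rroot (t : afftype) (r : rlabel) : weight :=
  match r with LB i => betaB t i | LT i => betaT t i end.

(* Lusztig datum: cB = (c_{beta_1}, c_{beta_2}, ...), cT = (c_{beta^1}, ...),
   with implicit trailing zeros, and cD = the partition c_delta
   (nonincreasing list of positive parts). *)
Record ldatum := LD { cB : seq nat; cT : seq nat; cD : seq nat }.

Definition coef (c : ldatum) (r : rlabel) : nat :=
  match r with LB i => nth 0%N (cB c) i | LT i => nth 0%N (cT c) i end.

Fixpoint trimz (s : seq nat) : seq nat :=
  match s with
  | [::] => [::]
  | x :: s' => let u := trimz s' in
               if (x == 0%N) && (u == [::]) then [::] else x :: u
  end.

Definition valid_datum (c : ldatum) : Prop :=
  trimz (cB c) = cB c /\ trimz (cT c) = cT c /\
  sorted geq (cD c) /\ all (fun x => 0 < x)%N (cD c).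

Fixpoint lin (beta : nat -> weight) (s : seq nat) (k : nat) : weight :=
  match k with
  | 0 => wzero
  | k'.+1 => wadd (lin beta s k') (wscale (nth 0%N s k') (beta k'))
  end.

Definition wt (t : afftype) (c : ldatum) : weight :=
  wadd (wscale (sumn (cD c)) (delta t))
       (wadd (lin (betaB t) (cB c) (size (cB c)))
             (lin (betaT t) (cT c) (size (cT c)))).

(* decorated pseudo-Weyl polytope: (left datum, right datum) *)
Definition pwpoly := (ldatum * ldatum)%type.
Definition cl (P : pwpoly) := P.1.
Definition cr (P : pwpoly) := P.2.
Definition wtP (t : afftype) (P : pwpoly) : weight := wt t (cr P).

Definition mu_r t P k := lin (betaB t) (cB (cr P)) k.
Definition mu_l t P k := lin (betaT t) (cT (cl P)) k.
Definition mu_R t P k := wsub (wtP t P) (lin (betaT t) (cT (cr P)) k). (* mu^{r,k} *)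
Definition mu_L t P k := wsub (wtP t P) (lin (betaB t) (cB (cl P)) k). (* mu^{l,k} *)
(* eventual values (the sequences are constant from the length of the data on) *)
Definition mu_r_inf t P := mu_r t P (size (cB (cr P))).
Definition mu_l_inf t P := mu_l t P (size (cT (cl P))).
Definition mu_R_inf t P := mu_R t P (size (cT (cr P))).
Definition mu_L_inf t P := mu_L t P (size (cB (cl P))).

Definition parallel (v w : weight) : bool := v.1 * w.2 == v.2 * w.1.

Definition isMV (t : afftype) (P : pwpoly) : Prop :=
  valid_datum (cl P) /\ valid_datum (cr P) /\ wt t (cl P) = wt t (cr P) /\
  (forall k, (2 <= k)%N ->
     Num.max (pw1 (wsub (mu_l t P k) (mu_r t P k.-1)))
             (pw0 (wsub (mu_r t P k) (mu_l t P k.-1))) = 0) /\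
  (forall k, (2 <= k)%N ->
     Num.min (pw0 (wsub (mu_L t P k) (mu_R t P k.-1)))
             (pw1 (wsub (mu_R t P k) (mu_L t P k.-1))) = 0) /\
  (let v := wsub (mu_r_inf t P) (mu_l_inf t P) in
   let w := wsub (mu_R_inf t P) (mu_L_inf t P) in
   if parallel v w then cD (cr P) = cD (cl P)
   else exists k : nat, dfac t * k%:Z = pa1 t v /\
          (perm_eq (cD (cr P)) (k :: cD (cl P)) \/
           perm_eq (cD (cl P)) (k :: cD (cr P)))) /\
  (let v := wsub (mu_r_inf t P) (mu_l_inf t P) in
   all (fun x => dfac t * x%:Z <= pa1 t v) (cD (cr P)) /\
   all (fun x => dfac t * x%:Z <= pa1 t v) (cD (cl P))).

(* "the" polytope satisfying Q, if any (None plays the role of the empty set) *)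
Definition pick (Q : pwpoly -> Prop) : option pwpoly :=
  match excluded_middle_informative (exists P, Q P) with
  | left H => Some (proj1_sig (constructive_indefinite_description Q H))
  | right _ => None
  end.

Definition incr0 (s : seq nat) := incr_nth s 0.
Definition decr0 (s : seq nat) : option (seq nat) :=
  match s with
  | [::] => None
  | 0%N :: _ => None
  | n.+1 :: s' => Some (trimz (n :: s'))
  end.

Definition e0 t (P : pwpoly) : option pwpoly :=
  pick (fun Q => isMV t Q /\
        cr Q = LD (cB (cr P)) (incr0 (cT (cr P))) (cD (cr P))).
Definition e1 t (P : pwpoly) : option pwpoly :=
  pick (fun Q => isMV t Q /\
        cl Q = LD (incr0 (cB (cl P))) (cT (cl P)) (cD (cl P))).
Definition f0 t (P : pwpoly) : option pwpoly :=
  match decr0 (cT (cr P)) with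
  | None => None
  | Some s => pick (fun Q => isMV t Q /\ cr Q = LD (cB (cr P)) s (cD (cr P)))
  end.
Definition f1 t (P : pwpoly) : option pwpoly :=
  match decr0 (cB (cl P)) with
  | None => None
  | Some s => pick (fun Q => isMV t Q /\ cl Q = LD s (cT (cl P)) (cD (cl P)))
  end.

(* Kashiwara's involution: P |-> wt(P) - P, which swaps left and right data *)
Definition star (P : pwpoly) : pwpoly := (cr P, cl P).
Definition f0star t (P : pwpoly) : option pwpoly := omap star (f0 t (star P)).

Definition iterO (g : pwpoly -> option pwpoly) (n : nat) (x : option pwpoly) :=
  iter n (fun y => obind g y) x.
Definition is_phi (g : pwpoly -> option pwpoly) (b : pwpoly) (n : nat) : Prop :=
  iterO g n (Some b) <> None /\ iterO g n.+1 (Some b) = None.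

(* Let b be an MV polytope with phi_0(b) = 0, i.e. c^r_{alpha_0}(b) = 0, and let
   n = c^l_{alpha_0}(b) = phi_0^*(b).  The polytope x = e_0^N b has right datum
   c^r(b) with c^r_{alpha_0} raised to N.  We write down an explicit candidate
   with that right datum: its left datum is the s_0-image of c^r(b) (using
   s_0 beta_{i+1} = beta^{i+2}), with multiplicity M = N + <alpha_0^vee, wt b>
   at alpha_0 and the same imaginary part.  The heart of the proof is that this
   candidate satisfies the four MV conditions; conditions 1, 2 and 4 follow from
   "gap vector" inequalities on b, proved by a discrete slope argument along the
   chains beta^2, beta^3, ... and beta_1, beta_2, ... which converge to delta.
   By BDKT uniqueness the candidate is x, so phi_0^*(x) = M, and applying
   f_0^* M times only clears the alpha_0 entry of the left datum: this gives the
   left datum of sigma_0(b), i.e. c^l_alpha(sigma_0 b) = c^r_{s_0 alpha}(b). *)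
From Pilot Require Import Defs.
From HB Require Import structures.
From mathcomp Require Import all_boot all_order all_algebra.
From mathcomp Require Import ring zify.
From Stdlib Require Import ClassicalEpsilon.
Import Order.TTheory GRing.Theory Num.Theory.
Local Open Scope ring_scope.

Lemma weight_eq (u v : weight) : u.1 = v.1 -> u.2 = v.2 -> u = v.
Proof. by case: u; case: v => ? ? ? ? /= -> ->. Qed.

Ltac weight_ring := apply: weight_eq => /=; ring.

Lemma wsub1 (a b : weight) : (wsub a b).1 = a.1 - b.1. Proof. by []. Qed.
Lemma wsub2 (a b : weight) : (wsub a b).2 = a.2 - b.2. Proof. by []. Qed.
Lemma wadd1 (a b : weight) : (wadd a b).1 = a.1 + b.1. Proof. by []. Qed.
Lemma wadd2 (a b : weight) : (wadd a b).2 = a.2 + b.2. Proof. by []. Qed.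
Lemma wscale1 k (a : weight) : (wscale k a).1 = k%:Z * a.1. Proof. by []. Qed.
Lemma wscale2 k (a : weight) : (wscale k a).2 = k%:Z * a.2. Proof. by []. Qed.
Lemma alpha0_1 : alpha0.1 = 1. Proof. by []. Qed.
Lemma alpha0_2 : alpha0.2 = 0. Proof. by []. Qed.
Lemma s0_1 t v : (s0 t v).1 = v.1 - ca0 t v. Proof. by []. Qed.
Lemma s0_2 t u : (s0 t u).2 = u.2. Proof. by []. Qed.

Definition weightE :=
  (wsub1, wsub2, wadd1, wadd2, wscale1, wscale2, alpha0_1, alpha0_2, s0_1, s0_2).

Lemma s0_add t u v : s0 t (wadd u v) = wadd (s0 t u) (s0 t v).
Proof. case: t; weight_ring. Qed.
Lemma s0_scale t k u : s0 t (wscale k u) = wscale k (s0 t u).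
Proof. case: t; weight_ring. Qed.
Lemma s0K t u : s0 t (s0 t u) = u.
Proof. case: t; weight_ring. Qed.

Lemma ca0_add t u v : ca0 t (wadd u v) = ca0 t u + ca0 t v.
Proof. case: t => /=; ring. Qed.
Lemma ca0_scale t k u : ca0 t (wscale k u) = k%:Z * ca0 t u.
Proof. case: t => /=; ring. Qed.
Lemma ca0_s0 t v : ca0 t (s0 t v) = - ca0 t v.
Proof. case: t => /=; ring. Qed.
Lemma ca0_delta t : ca0 t (delta t) = 0. Proof. by case: t. Qed.

Lemma delta2_gt0 t : 0 < (delta t).2. Proof. by case: t. Qed.

Lemma pa1E t v : pa1 t v = -2 * ((delta t).2 * v.1 - (delta t).1 * v.2).
Proof. case: t => /=; ring. Qed.

(* [a0side d p]: the vector d lies weakly on the alpha_0 side of the line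
   spanned by p, i.e. its slope d.2/d.1 is at most that of p. *)
Definition a0side (d p : weight) : bool := d.2 * p.1 <= d.1 * p.2.

Definition wmove (d p : weight) (x : int) : weight := (d.1 + x * p.1, d.2 + x * p.2).

Lemma a0side_move (d p : weight) (x : int) : a0side (wmove d p x) p = a0side d p.
Proof.
rewrite /a0side /= !mulrDl -[x * p.2 * p.1]mulrA [p.2 * p.1]mulrC mulrA.
exact: lerD2r.
Qed.

Lemma a0side_trans {d p q : weight} : 0 <= d.2 -> 0 < p.2 -> 0 <= q.2 ->
  a0side d p -> a0side p q -> a0side d q.
Proof.
rewrite /a0side => hd hp hq hdp hpq; rewrite -(ler_pM2l hp).
have h1 : d.2 * (p.2 * q.1) <= d.2 * (p.1 * q.2) by exact: ler_wpM2l.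
have h2 : (d.2 * p.1) * q.2 <= (d.1 * p.2) * q.2 by exact: ler_wpM2r.
nia.
Qed.

Lemma a0side_ge0 {d p : weight} : 0 <= d.2 -> 0 <= p.1 -> 0 < p.2 -> a0side d p -> 0 <= d.1.
Proof.
rewrite /a0side => hd hp1 hp2 h.
have : 0 <= d.1 * p.2 by apply: le_trans h; exact: mulr_ge0.
by rewrite pmulr_lge0.
Qed.

Lemma slope_up {D q : nat -> weight} {x : nat -> int} :
  (forall j, D j.+1 = wmove (D j) (q j) (x j)) ->
  (forall j, 0 < (q j).2) -> (forall j, a0side (q j) (q j.+1)) ->
  (forall j, 0 <= (D j).2) ->
  a0side (D 0%N) (q 0%N) -> forall j, a0side (D j) (q j).
Proof.
move=> hD hq hm hd h0; elim=> [//|j IH].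
apply: (a0side_trans (hd _) (hq j) (ltW (hq _)) _ (hm j)).
by rewrite hD a0side_move.
Qed.

Lemma slope_down {D q : nat -> weight} {x : nat -> int} (K : nat) :
  (forall j, D j.+1 = wmove (D j) (q j) (x j)) ->
  (forall j, 0 < (q j).2) -> (forall j, a0side (q j.+1) (q j)) ->
  (forall j, 0 <= (D j).2) ->
  (forall j, (K <= j)%N -> a0side (D j) (q j)) -> forall j, a0side (D j) (q j).
Proof.
move=> hD hq hm hd hK.
have step j : a0side (D j.+1) (q j.+1) -> a0side (D j) (q j).
  move=> h; rewrite -(a0side_move (D j) (q j) (x j)) -hD.
  exact: (a0side_trans (hd _) (hq _) (ltW (hq j)) h (hm j)).
have from_above d j : a0side (D (d + j)) (q (d + j)) -> a0side (D j) (q j).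
  by elim: d j => [//|d IH] j h; apply/IH/step; rewrite -addSn.
by move=> j; apply: (from_above K j); apply: hK; exact: leq_addr.
Qed.

(* For A_2^{(2)} the roots depend on the parity of their index: [parity i]
   records i and i.+1 through their halves and splits on the parity of i. *)
Lemma halfE (i : nat) : i = (odd i + 2 * i./2)%N.
Proof. by rewrite -{1}(odd_double_half i) -muln2 mulnC. Qed.

Ltac parity i :=
  let e := fresh "e" in let e' := fresh "e" in
  have e := halfE i; have e' := halfE i.+1; move: e e'; simpl odd;
  case: (odd i) => /= e e'.

Lemma betaT0 t : betaT t 0 = alpha0. Proof. by case: t. Qed.

Lemma s0_betaB t i : s0 t (betaB t i) = betaT t i.+1.
Proof.
case: t => /=; rewrite /s0 /ca0 /=; first by f_equal; lia.
by parity i; simpl; f_equal; lia.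
Qed.

Lemma s0_betaT t i : s0 t (betaT t i.+1) = betaB t i.
Proof. by rewrite -s0_betaB s0K. Qed.

Lemma betaT_2_gt0 t i : 0 < (betaT t i.+1).2.
Proof. case: t => /=; [lia|]; parity i; simpl; lia. Qed.
Lemma betaT_1_ge0 t i : 0 <= (betaT t i.+1).1.
Proof. case: t => /=; [lia|]; parity i; simpl; lia. Qed.
Lemma betaT_side t i : a0side (betaT t i.+1) (betaT t i.+2).
Proof. rewrite /a0side; case: t => /=; [nia|]; parity i; simpl; nia. Qed.
Lemma betaT_delta_side t i : a0side (betaT t i.+1) (delta t).
Proof. rewrite /a0side; case: t => /=; [nia|]; parity i; simpl; nia. Qed.

Lemma betaB_2_gt0 t i : 0 < (betaB t i).2.
Proof. case: t => /=; [lia|]; parity i; simpl; lia. Qed.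
Lemma betaB_1_ge0 t i : 0 <= (betaB t i).1.
Proof. case: t => /=; [lia|]; parity i; simpl; lia. Qed.
Lemma betaB_side t i : a0side (betaB t i.+1) (betaB t i).
Proof. rewrite /a0side; case: t => /=; [nia|]; parity i; simpl; nia. Qed.
Lemma delta_betaB_side t i : a0side (delta t) (betaB t i).
Proof. rewrite /a0side; case: t => /=; [nia|]; parity i; simpl; nia. Qed.

Lemma rroot_inj t r r' : rroot t r = rroot t r' -> r = r'.
Proof.
case: r r' => i [] j /= e;
  have e1 := congr1 fst e; have e2 := congr1 snd e; clear e;
  match goal with
  | |- LB _ = LB _ => congr LB
  | |- LT _ = LT _ => congr LT
  | _ => exfalso
  end;
  move: e1 e2; (case: t => /=; [lia|]); parity i; parity j; move=> f1 f2; lia.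
Qed.

Lemma lin_ext beta beta' s s' k :
  (forall i, (i < k)%N -> nth 0%N s i = nth 0%N s' i /\ beta i = beta' i) ->
  lin beta s k = lin beta' s' k.
Proof.
elim: k => [//|k IH] h /=.
rewrite IH; last by move=> i hi; apply: h; apply: ltnW.
by case: (h k (ltnSn k)) => -> ->.
Qed.

Lemma linS beta s k :
  lin beta s k.+1 = wadd (lin beta s k) (wscale (nth 0%N s k) (beta k)).
Proof. by []. Qed.

Lemma lin_const beta s k : (size s <= k)%N -> lin beta s k = lin beta s (size s).
Proof.
move=> /subnKC <-; elim: (k - size s)%N => [|d IH]; first by rewrite addn0.
rewrite addnS /= IH nth_default ?leq_addr //; weight_ring.
Qed.

Lemma lin_behead beta s k :
  lin beta s k.+1 =
  wadd (wscale (nth 0%N s 0) (beta 0%N)) (lin (fun i => beta i.+1) (behead s) k).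
Proof.
elim: k => [|k IH]; first by weight_ring.
change (lin beta s k.+2) with
  (wadd (lin beta s k.+1) (wscale (nth 0%N s k.+1) (beta k.+1))).
rewrite IH /= nth_behead; weight_ring.
Qed.

Lemma lin_s0 t beta s k : s0 t (lin beta s k) = lin (fun i => s0 t (beta i)) s k.
Proof.
elim: k => [|k IH]; first by case: t; weight_ring.
by rewrite /= -IH s0_add s0_scale.
Qed.

(* A sum along beta^1, beta^2, ... is its alpha_0 part plus the s_0-image of a
   sum along beta_1, beta_2, ...: this is how s_0 transports data. *)
Lemma lin_betaT t s k :
  lin (betaT t) s k.+1 =
  wadd (wscale (nth 0%N s 0) alpha0) (s0 t (lin (betaB t) (behead s) k)).
Proof.
rewrite lin_behead betaT0 lin_s0; congr wadd.
by apply: lin_ext => i _; rewrite s0_betaB.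
Qed.

Lemma wt_at t d k : (size (cB d) <= k)%N -> (size (cT d) <= k)%N ->
  wt t d = wadd (wscale (sumn (cD d)) (delta t))
                (wadd (lin (betaB t) (cB d) k) (lin (betaT t) (cT d) k)).
Proof. by move=> h1 h2; rewrite /wt (lin_const _ _ _ h1) (lin_const _ _ _ h2). Qed.

Lemma nth_trimz s i : nth 0%N (trimz s) i = nth 0%N s i.
Proof.
elim: s i => [//|x s IH] i /=.
case: ifP => [/andP [/eqP -> /eqP e] | _]; last by case: i.
by case: i => [//|i] /=; rewrite -IH e nth_nil.
Qed.

Lemma trimz_idem s : trimz (trimz s) = trimz s.
Proof. by elim: s => [//|x s IH] /=; case: ifP => [//|h] /=; rewrite IH h. Qed.

Lemma trimz_behead s : trimz s = s -> trimz (behead s) = behead s.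
Proof. by case: s => [//|x s] /=; case: ifP => // _ [->]. Qed.

Lemma size_trimz s : (size (trimz s) <= size s)%N.
Proof. by elim: s => [//|x s IH] /=; case: ifP. Qed.

Lemma lin_trimz beta s k : lin beta (trimz s) k = lin beta s k.
Proof. by apply: lin_ext => i _; rewrite nth_trimz. Qed.

Definition dech (s : seq nat) : seq nat :=
  match s with [::] => [::] | k :: s' => trimz (k.-1 :: s') end.

Lemma dech_nth0 s : nth 0%N (dech s) 0 = (nth 0%N s 0).-1.
Proof. by case: s => [//|k s]; rewrite /dech nth_trimz. Qed.
Lemma dech_nthS s i : nth 0%N (dech s) i.+1 = nth 0%N s i.+1.
Proof. by case: s => [//|k s]; rewrite /dech nth_trimz. Qed.

Lemma iter_dech_nth0 j s : nth 0%N (iter j dech s) 0 = (nth 0%N s 0 - j)%N.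
Proof.
elim: j => [|j IH] /=; first by rewrite subn0.
by rewrite dech_nth0 IH subnS.
Qed.

Lemma iter_dech_nthS j s i : nth 0%N (iter j dech s) i.+1 = nth 0%N s i.+1.
Proof. by elim: j => [//|j IH] /=; rewrite dech_nthS IH. Qed.

Lemma valid_iter_dech j a s d :
  valid_datum (LD a s d) -> valid_datum (LD a (iter j dech s) d).
Proof.
case=> /= ha [hs hd]; split => //; split => //=.
by elim: j => [//|j IH] /=; case: (iter j dech s) IH => [//|k s'] _; rewrite trimz_idem.
Qed.

Lemma decr0_dech s : (0 < nth 0%N s 0)%N -> decr0 s = Some (dech s).
Proof. by case: s => [//|[|k] s]. Qed.
Lemma decr0_none s : nth 0%N s 0 = 0%N -> decr0 s = None.
Proof. by case: s => [//|[|k] s]. Qed.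

Lemma iter_incr0 j s : iter j.+1 incr0 s = (nth 0%N s 0 + j.+1)%N :: behead s.
Proof.
elim: j => [|j IH]; first by case: s => [|x s]; rewrite /= /incr0 /= ?addn1.
by rewrite iterS IH /incr0 /= !addnS.
Qed.

Lemma iter_incr0_nth0 j s : nth 0%N (iter j incr0 s) 0 = (nth 0%N s 0 + j)%N.
Proof. by case: j => [|j]; rewrite ?addn0 // iter_incr0. Qed.
Lemma iter_incr0_nthS j s i : nth 0%N (iter j incr0 s) i.+1 = nth 0%N s i.+1.
Proof. by case: j => [//|j]; rewrite iter_incr0 /= nth_behead. Qed.
Lemma size_iter_incr0 j s : (size (iter j incr0 s) <= (size s).+1)%N.
Proof. by case: j => [|j]; rewrite ?iter_incr0 /= ?size_behead; lia. Qed.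

Lemma pick_some (Q : pwpoly -> Prop) P : Defs.pick Q = Some P -> Q P.
Proof.
rewrite /Defs.pick; case: excluded_middle_informative => // h [<-].
exact: proj2_sig.
Qed.

Lemma pick_none (Q : pwpoly -> Prop) : Defs.pick Q = None -> forall P, ~ Q P.
Proof.
rewrite /Defs.pick; case: excluded_middle_informative => // e _ P hP.
by apply: e; exists P.
Qed.

Lemma iterO_None g n : iterO g n None = None.
Proof. by elim: n => [//|n IH] /=; rewrite IH. Qed.

Lemma iterO_add g a c x : iterO g (a + c) x = iterO g a (iterO g c x).
Proof. by elim: a => [//|a IH]; rewrite addSn /= IH. Qed.

(* Under the existence
   half of BDKT, f_0 lowers c^r_{alpha_0} by one as long as it is positive, so
   phi_0 = c^r_{alpha_0}; through Kashiwara's involution, phi_0^* = c^l_{alpha_0}. *)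
Section LoweringOperators.
Variable t : afftype.
Hypothesis BDKT_r_ex : forall c, valid_datum c -> exists P, isMV t P /\ cr P = c.

Lemma f0_iter P j : valid_datum (cr P) -> (j <= nth 0%N (cT (cr P)) 0)%N ->
  exists P', iterO (f0 t) j (Some P) = Some P' /\
    cr P' = LD (cB (cr P)) (iter j dech (cT (cr P))) (cD (cr P)).
Proof.
move=> hv; elim: j => [|j IH] hj; first by exists P; split => //; case: (cr P).
case: IH => [|P' [e1 e2]]; first exact: ltnW.
rewrite /= e1 /= /f0 e2 /= decr0_dech; last by rewrite iter_dech_nth0; lia.
have hv' : valid_datum (LD (cB (cr P)) (iter j.+1 dech (cT (cr P))) (cD (cr P))).
  by apply: valid_iter_dech; case: (cr P) hv.
case: (BDKT_r_ex _ hv') => Q hQ.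
case e3: (Defs.pick _) => [P2|]; last by case: (pick_none _ e3 Q hQ).
by exists P2; split => //; case: (pick_some _ _ e3) => _ ->.
Qed.

Lemma phi_f0 P m : valid_datum (cr P) -> is_phi (f0 t) P m ->
  m = nth 0%N (cT (cr P)) 0.
Proof.
move=> hv [h1 h2]; set h := nth 0%N _ 0.
case: (ltngtP m h) => // hmh.
- by case: (f0_iter P m.+1 hv hmh) => P' [e _]; rewrite e in h2.
- case: (f0_iter P h hv (leqnn h)) => P' [e1 e2].
  have e3 : iterO (f0 t) h.+1 (Some P) = None.
    by rewrite /= e1 /= /f0 decr0_none // e2 /= iter_dech_nth0 subnn.
  by case: h1; rewrite -(subnK hmh) iterO_add e3 iterO_None.
Qed.

Lemma f0star_iterE j x :
  iterO (f0star t) j (Some x) = omap star (iterO (f0 t) j (Some (star x))).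
Proof.
elim: j => [|j IH]; first by case: x.
rewrite /= IH; case: (iterO (f0 t) j _) => [y|//] /=.
by rewrite /f0star; case: y.
Qed.

Lemma f0star_iter P j : valid_datum (cl P) -> (j <= nth 0%N (cT (cl P)) 0)%N ->
  exists P', iterO (f0star t) j (Some P) = Some P' /\
    cl P' = LD (cB (cl P)) (iter j dech (cT (cl P))) (cD (cl P)).
Proof.
move=> hv hj; case: (f0_iter (star P) j hv hj) => P' [e1 e2].
by exists (star P'); rewrite f0star_iterE e1.
Qed.

Lemma phi_f0star P m : valid_datum (cl P) -> is_phi (f0star t) P m ->
  m = nth 0%N (cT (cl P)) 0.
Proof.
move=> hv [h1 h2]; apply: (phi_f0 (star P)) => //; rewrite !f0star_iterE in h1 h2.
split; first by move=> e; apply: h1; rewrite e.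
by move: h2; case: (iterO (f0 t) m.+1 _).
Qed.
End LoweringOperators.

Lemma e0_iter t j b x : isMV t b -> iterO (e0 t) j (Some b) = Some x ->
  isMV t x /\ cr x = LD (cB (cr b)) (iter j incr0 (cT (cr b))) (cD (cr b)).
Proof.
move=> hb; elim: j x => [|j IH] x /=; first by case=> <-; split => //; case: (cr b).
case e: (iterO (e0 t) j (Some b)) => [y|//] /= he.
case: (IH y e) => hy ey.
by case: (pick_some _ _ he) => hx ->; rewrite ey.
Qed.

Lemma e0_iter_unique t j b x Q :
  (forall c, valid_datum c -> exists! P, isMV t P /\ cr P = c) ->
  isMV t b -> iterO (e0 t) j (Some b) = Some x ->
  isMV t Q -> cr Q = LD (cB (cr b)) (iter j incr0 (cT (cr b))) (cD (cr b)) ->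
  x = Q.
Proof.
move=> BDKT_r hb hx hQ eQ; have [hxMV ex] := e0_iter t j b x hb hx.
have [_ [hvQ _]] := hQ.
case: (BDKT_r (cr Q) hvQ) => P [_ hu].
by rewrite -(hu x) ?(hu Q) // ex eQ.
Qed.

Lemma max_eq0 (a b : int) : Num.max a b = 0 -> a <= 0 /\ b <= 0.
Proof. by rewrite maxEle; case: ifP => h e; lia. Qed.
Lemma min_eq0 (a b : int) : Num.min a b = 0 -> 0 <= a /\ 0 <= b.
Proof. by rewrite minEle; case: ifP => h e; lia. Qed.
Lemma max_eq0I (a b : int) : a = 0 -> b <= 0 -> Num.max a b = 0.
Proof. by rewrite maxEle; case: ifP => h e; lia. Qed.
Lemma min_eq0I (a b : int) : 0 <= a -> b = 0 -> Num.min a b = 0.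
Proof. by rewrite minEle; case: ifP => h e; lia. Qed.

(* Gap inequalities for an MV polytope b = (bL, bR) with c^r_{alpha_0}(b) = 0.
   With n = c^l_{alpha_0}(b), consider the lower gap vector
     D_j = n alpha_0 + s_0 mu^r_j - mu^l_{j+1}
   and the upper gap vector
     E_k = (n - <alpha_0^vee, wt b>) alpha_0 + (wt b - mu^{l,k})
           - s_0 (wt b - mu^{r,k+1}).
   Their alpha_0-coordinates are nonnegative; this is what makes the
   candidate polytope below satisfy MV conditions 1 and 2, while the fact that
   D lies on the alpha_0 side of delta gives condition 4.  The second half of
   the section builds that candidate and checks the MV conditions. *)
Section Reflection.
Variable t : afftype.
Variables bL bR : ldatum.
Hypothesis hb : isMV t (bL, bR).
Hypothesis hbR0 : nth 0%N (cT bR) 0 = 0%N.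

Local Notation n := (nth 0%N (cT bL) 0).
Local Notation W := (wt t bR).
(* mur j = mu^r_j, mul j = mu^l_j; the upper vertices are
   mu^{r,k} = W - nuR k and mu^{l,k} = W - nuL k. *)
Local Notation mur j := (lin (betaB t) (cB bR) j).
Local Notation mul j := (lin (betaT t) (cT bL) j).
Local Notation nuR j := (lin (betaT t) (cT bR) j).
Local Notation nuL j := (lin (betaB t) (cB bL) j).

Lemma mv_cond1_2 k : (1 < k)%N -> (mul k).2 <= (mur k.-1).2.
Proof.
move=> h; case: hb => _ [_ [_ [H _]]].
by case: (max_eq0 _ _ (H k h)); rewrite /pw1 /pw0 /mu_l /mu_r /= => *; lia.
Qed.
Lemma mv_cond1_1 k : (1 < k)%N -> (mur k).1 <= (mul k.-1).1.
Proof.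
move=> h; case: hb => _ [_ [_ [H _]]].
by case: (max_eq0 _ _ (H k h)); rewrite /pw1 /pw0 /mu_l /mu_r /= => *; lia.
Qed.
Lemma mv_cond2_1 k : (1 < k)%N -> (nuL k).1 <= (nuR k.-1).1.
Proof.
move=> h; case: hb => _ [_ [_ [_ [H _]]]].
by case: (min_eq0 _ _ (H k h)); rewrite /pw1 /pw0 /mu_L /mu_R /= => *; lia.
Qed.
Lemma mv_cond2_2 k : (1 < k)%N -> (nuR k).2 <= (nuL k.-1).2.
Proof.
move=> h; case: hb => _ [_ [_ [_ [H _]]]].
by case: (min_eq0 _ _ (H k h)); rewrite /pw1 /pw0 /mu_L /mu_R /= => *; lia.
Qed.

Definition lgap j : weight :=
  ((n : int) + (s0 t (mur j)).1 - (mul j.+1).1, (mur j).2 - (mul j.+1).2).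
Definition lstep j : int := (nth 0%N (cB bR) j)%:Z - (nth 0%N (cT bL) j.+1)%:Z.

Lemma lgap_rec j : lgap j.+1 = wmove (lgap j) (betaT t j.+1) (lstep j).
Proof.
rewrite /lgap /wmove /lstep [mur j.+1]linS [mul j.+2]linS; apply: weight_eq; cbn [fst snd].
- by rewrite s0_add s0_scale s0_betaB !weightE; ring.
- by rewrite -s0_betaB !weightE; ring.
Qed.

Lemma lgap2_ge0 j : 0 <= (lgap j).2.
Proof.
rewrite /lgap; cbn [snd]; case: j => [|j]; first by rewrite /= betaT0 /=; lia.
by have := mv_cond1_2 j.+2 isT; rewrite /=; lia.
Qed.

Lemma lgap_side j : a0side (lgap j) (betaT t j.+1).
Proof.
apply: (slope_up lgap_rec).
- exact: betaT_2_gt0.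
- exact: betaT_side.
- exact: lgap2_ge0.
- by rewrite /a0side /lgap /= betaT0 /=; case: t => /=; lia.
Qed.

Lemma lgap1_ge0 j : 0 <= (lgap j).1.
Proof.
exact: (a0side_ge0 (lgap2_ge0 j) (betaT_1_ge0 t j) (betaT_2_gt0 t j) (lgap_side j)).
Qed.

Lemma lgap_delta j : a0side (lgap j) (delta t).
Proof.
exact: (a0side_trans (lgap2_ge0 j) (betaT_2_gt0 t j) (ltW (delta2_gt0 t))
  (lgap_side j) (betaT_delta_side t j)).
Qed.

Definition ugap k : weight :=
  ((n : int) - ca0 t W + (nuL k).1 - (s0 t (nuR k.+1)).1, (nuL k).2 - (nuR k.+1).2).
Definition ustep k : int := (nth 0%N (cB bL) k)%:Z - (nth 0%N (cT bR) k.+1)%:Z.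

Lemma ugap_rec k : ugap k.+1 = wmove (ugap k) (betaB t k) (ustep k).
Proof.
rewrite /ugap /wmove /ustep [nuL k.+1]linS [nuR k.+2]linS; apply: weight_eq; cbn [fst snd].
- by rewrite s0_add s0_scale s0_betaT !weightE; ring.
- by rewrite -(s0_betaT t k) !weightE; ring.
Qed.

Lemma ugap2_ge0 k : 0 <= (ugap k).2.
Proof.
rewrite /ugap; cbn [snd]; case: k => [|k]; first by rewrite /= hbR0 /=; lia.
by have := mv_cond2_2 k.+2 isT; rewrite /=; lia.
Qed.

Definition size_bound := (size (cB bR) + size (cT bR) + size (cB bL) + size (cT bL))%N.

(* Far out, E differs from D by a multiple of delta (since wt bL = wt bR),
   hence also lies on the alpha_0 side of delta. *)
Lemma ugap_delta_far k : (size_bound <= k)%N -> a0side (ugap k) (delta t).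
Proof.
move=> hk.
have s1 : (size (cB bR) <= k)%N by move: hk; rewrite /size_bound; lia.
have s2 : (size (cT bR) <= k)%N by move: hk; rewrite /size_bound; lia.
have s3 : (size (cB bL) <= k)%N by move: hk; rewrite /size_bound; lia.
have s4 : (size (cT bL) <= k)%N by move: hk; rewrite /size_bound; lia.
have eA : nuR k.+1 = nuR k by rewrite (lin_const _ _ k.+1) ?(lin_const _ _ k) //; apply: leqW.
have eu : mul k.+1 = mul k by rewrite (lin_const _ _ k.+1) ?(lin_const _ _ k) //; apply: leqW.
have eW := wt_at t bR k s1 s2; have eWL := wt_at t bL k s3 s4.
have ew : wt t bL = wt t bR by case: hb => _ [_ [-> _]].
suff -> : ugap k = wmove (lgap k) (delta t) ((sumn (cD bR))%:Z - (sumn (cD bL))%:Z).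
  by rewrite a0side_move; exact: lgap_delta.
rewrite /ugap /lgap /wmove eA eu; apply: weight_eq; cbn [fst snd].
- rewrite !s0_1 eW ca0_add ca0_add ca0_scale ca0_delta.
  by have := congr1 fst ew; rewrite eWL eW /= => h; lia.
- by have := congr1 snd ew; rewrite eWL eW /= => h; lia.
Qed.

Lemma ugap_side k : a0side (ugap k) (betaB t k).
Proof.
apply: (slope_down size_bound ugap_rec).
- exact: betaB_2_gt0.
- exact: betaB_side.
- exact: ugap2_ge0.
- move=> j hj; apply: (a0side_trans (ugap2_ge0 j) (delta2_gt0 t)
    (ltW (betaB_2_gt0 t j)) (ugap_delta_far j hj)).
  exact: delta_betaB_side.
Qed.

Lemma ugap1_ge0 k : 0 <= (ugap k).1.
Proof.
exact: (a0side_ge0 (ugap2_ge0 k) (betaB_1_ge0 t k) (betaB_2_gt0 t k) (ugap_side k)).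
Qed.

(* The candidate for e_0^N b, given N >= n - <alpha_0^vee, wt b> (which holds
   for the N used to define sigma_0): right datum c^r(b) with alpha_0 entry N,
   left datum the s_0-image of c^r(b) with alpha_0 entry
   M = N + <alpha_0^vee, wt b>. *)
Variable N : nat.
Hypothesis hN : (n : int) - ca0 t W <= N%:Z.

Definition Mz := (N : int) + ca0 t W.
Definition M := absz Mz.

Lemma n_le_Mz : (n : int) <= Mz. Proof. by rewrite /Mz; lia. Qed.
Lemma ME : (M : int) = Mz.
Proof. by rewrite /M gez0_abs //; have := n_le_Mz; lia. Qed.

Definition candL := LD (behead (cT bR)) (trimz (M :: cB bR)) (cD bR).
Definition candR := LD (cB bR) (iter N incr0 (cT bR)) (cD bR).
Definition cand : pwpoly := (candL, candR).

Local Notation nuLc k := (lin (betaB t) (behead (cT bR)) k).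

Lemma cand_mul k : lin (betaT t) (trimz (M :: cB bR)) k.+1 =
  wadd (wscale M alpha0) (s0 t (mur k)).
Proof. by rewrite lin_trimz lin_betaT. Qed.
Lemma cand_nuR k : lin (betaT t) (iter N incr0 (cT bR)) k.+1 =
  wadd (wscale N alpha0) (s0 t (nuLc k)).
Proof.
rewrite lin_betaT iter_incr0_nth0 hbR0 add0n; congr (wadd _ (s0 t _)).
by apply: lin_ext => i _; rewrite !nth_behead iter_incr0_nthS.
Qed.
Lemma b_nuR k : nuR k.+1 = s0 t (nuLc k).
Proof.
rewrite lin_betaT hbR0; apply: weight_eq; rewrite !weightE /=; ring.
Qed.

Lemma valid_candL : valid_datum candL.
Proof.
case: hb => _ [[h1 [h2 [h3 h4]]] _].
by split; [exact: trimz_behead | split; [exact: trimz_idem | split]].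
Qed.
Lemma valid_candR : valid_datum candR.
Proof.
case: hb => _ [[h1 [h2 [h3 h4]]] _]; split; [|split; [|split]] => //=.
by case: N => [//|N']; rewrite iter_incr0 addnS /= trimz_behead.
Qed.

(* Both data of the candidate have the same weight: the difference
   (M - N) alpha_0 = <alpha_0^vee, wt b> alpha_0 is exactly what s_0 moves. *)
Lemma wt_cand : wt t candL = wt t candR.
Proof.
pose K := (size (cB bR) + size (cT bR))%N.
have sB : (size (cB bR) <= K)%N by rewrite /K; lia.
have sT : (size (behead (cT bR)) <= K)%N by rewrite size_behead /K; lia.
have eW : W = wadd (wscale (sumn (cD bR)) (delta t))
                   (wadd (mur K) (s0 t (nuLc K))).
  by rewrite (wt_at t bR K.+1) ?b_nuR ?(lin_const _ _ K.+1) ?(lin_const _ _ K) //;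
    rewrite /K; lia.
have eL : wt t candL = wadd (wscale (sumn (cD bR)) (delta t))
           (wadd (nuLc K) (wadd (wscale M alpha0) (s0 t (mur K)))).
  rewrite (wt_at t candL K.+1); cbn [candL cB cT cD].
  - by rewrite cand_mul (lin_const _ _ K.+1) ?(lin_const _ _ K) // leqW.
  - exact: leqW.
  - by apply: leq_trans (size_trimz _) _; rewrite /= ltnS.
have eR : wt t candR = wadd (wscale (sumn (cD bR)) (delta t))
           (wadd (mur K) (wadd (wscale N alpha0) (s0 t (nuLc K)))).
  rewrite (wt_at t candR K.+1); cbn [candR cB cT cD].
  - by rewrite cand_nuR (lin_const _ _ K.+1) ?(lin_const _ _ K) // leqW.
  - exact: leqW.
  - by apply: leq_trans (size_iter_incr0 _ _) _; rewrite ltnS /K; lia.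
have hM := ME; rewrite /Mz eW !ca0_add ca0_scale ca0_delta ca0_s0 in hM.
by rewrite eL eR; apply: weight_eq; rewrite !weightE /=; lia.
Qed.

(* MV condition 1 for the candidate: along the lower vertices the alpha_1
   coordinates agree, and the alpha_0 inequality is (D_j).1 >= 0 (with n <= M). *)
Lemma cand_cond1 k : (1 < k)%N ->
  Num.max (pw1 (wsub (mu_l t cand k) (mu_r t cand k.-1)))
          (pw0 (wsub (mu_r t cand k) (mu_l t cand k.-1))) = 0.
Proof.
case: k => [//|[//|j]] _; rewrite /mu_l /mu_r /pw1 /pw0.
cbn [predn cl cr cand candL candR cB cT fst snd].
rewrite !cand_mul; apply: max_eq0I; first by rewrite !weightE; ring.
have h1 : (mur j.+2).1 <= (mul j.+1).1 := mv_cond1_1 j.+2 isT.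
have h2 := lgap1_ge0 j.
have h3 := n_le_Mz; have h4 := ME; rewrite /lgap in h2; cbn [fst] in h2.
move: (mur j.+2) (mur j) (mul j.+1) h1 h2 => R2 R0 U1 h1 h2.
by rewrite !weightE in h2 *; lia.
Qed.

(* MV condition 2 for the candidate, dually, from (E_k).1 >= 0. *)
Lemma cand_cond2 k : (1 < k)%N ->
  Num.min (pw0 (wsub (mu_L t cand k) (mu_R t cand k.-1)))
          (pw1 (wsub (mu_R t cand k) (mu_L t cand k.-1))) = 0.
Proof.
case: k => [//|[//|j]] _; rewrite /mu_L /mu_R /pw1 /pw0 /wtP.
cbn [predn cl cr cand candL candR cB cT fst snd].
rewrite !cand_nuR; apply: min_eq0I; last by rewrite !weightE; ring.
have h1 : (nuL j.+2).1 <= (nuR j.+1).1 := mv_cond2_1 j.+2 isT.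
have h2 := ugap1_ge0 j.+2; rewrite /ugap !b_nuR in h1 h2; cbn [fst] in h2.
rewrite s0K in h2.
move: (nuLc j.+2) (nuLc j) (nuL j.+2) (wt t candR) h1 h2 => Q2 Q0 L2 V h1 h2.
by rewrite !weightE in h1 h2 *; lia.
Qed.

Lemma cand_lower_diff : wsub (mu_r_inf t cand) (mu_l_inf t cand) =
  wsub (mur (size (cB bR))) (wadd (wscale M alpha0) (s0 t (mur (size (cB bR))))).
Proof.
rewrite /mu_r_inf /mu_l_inf /mu_l /mu_r; cbn [cl cr cand candL candR cB cT fst snd].
by rewrite -(lin_const _ (trimz (M :: cB bR)) (size (cB bR)).+1 (size_trimz _)) cand_mul.
Qed.

Lemma cand_upper_diff : (wsub (mu_R_inf t cand) (mu_L_inf t cand)).2 = 0.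
Proof.
rewrite /mu_R_inf /mu_L_inf /mu_L /mu_R; cbn [cl cr cand candL candR cB cT fst snd].
rewrite -(lin_const _ (iter N incr0 (cT bR)) (size (cT bR)).+1 (size_iter_incr0 _ _)).
have hs : (size (behead (cT bR)) <= size (cT bR))%N by rewrite size_behead; lia.
rewrite cand_nuR -(lin_const _ _ _ hs).
by move: (nuLc (size (cT bR))) (wtP t cand) => X Y; rewrite !weightE; ring.
Qed.

(* MV condition 4 transfers from b: (., alpha_1) of the lower difference only
   grows, because D lies on the alpha_0 side of delta and n <= M. *)
Lemma cand_pa1 : pa1 t (wsub (mu_r_inf t (bL, bR)) (mu_l_inf t (bL, bR))) <=
  pa1 t (wsub (mu_r_inf t cand) (mu_l_inf t cand)).
Proof.
rewrite cand_lower_diff.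
have hg := lgap_delta size_bound; rewrite /a0side /lgap in hg; cbn [fst snd] in hg.
have e1 : mur size_bound = mur (size (cB bR)).
  by apply: lin_const; rewrite /size_bound; lia.
have e2 : mul size_bound.+1 = mul (size (cT bL)).
  by apply: lin_const; rewrite /size_bound; lia.
rewrite e1 e2 in hg.
change (mu_r_inf t (bL, bR)) with (mur (size (cB bR))).
change (mu_l_inf t (bL, bR)) with (mul (size (cT bL))).
have h3 := n_le_Mz; have h4 := ME; have h5 := delta2_gt0 t.
have h6 : 0 <= (delta t).2 * (Mz - (n : int)) by apply: mulr_ge0; [exact: ltW | lia].
rewrite !pa1E.
move: (mur (size (cB bR))) (mul (size (cT bL))) hg => X Y hg.
by rewrite !weightE in hg *; nia.
Qed.

(* The candidate is an MV polytope; condition 3 holds because both extreme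
   differences are multiples of alpha_0, hence parallel. *)
Lemma cand_isMV : isMV t cand.
Proof.
split; [exact: valid_candL|]; split; [exact: valid_candR|]; split; [exact: wt_cand|].
split; [exact: cand_cond1|]; split; [exact: cand_cond2|]; split => /=.
- have hv : (wsub (mu_r_inf t cand) (mu_l_inf t cand)).2 = 0.
    by rewrite cand_lower_diff; move: (mur (size (cB bR))) => X; rewrite !weightE; ring.
  by rewrite /parallel hv cand_upper_diff mulr0 mul0r eqxx.
- case: hb => _ [_ [_ [_ [_ [_ [h4 _]]]]]]; have k := cand_pa1.
  by split; apply: sub_all h4 => y hy; exact: le_trans hy k.
Qed.
End Reflection.

Lemma reflected_datum t (R c : ldatum) :
  cB c = behead (cT R) -> nth 0%N (cT c) 0 = 0%N ->
  (forall i, nth 0%N (cT c) i.+1 = nth 0%N (cB R) i) -> cD c = cD R ->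
  coef c (LT 0) = 0%N /\
  (forall r r' : rlabel, rroot t r <> alpha0 -> rroot t r' = s0 t (rroot t r) ->
     coef c r = coef R r') /\
  cD c = cD R.
Proof.
move=> eB eT0 eTS eD; split => //; split => // [[i|[|i]]] r' hr hr'.
- have -> : r' = LT i.+1 by apply: (rroot_inj t); rewrite hr' /= s0_betaB.
  by rewrite /= eB nth_behead.
- by case: hr; rewrite /= betaT0.
- have -> : r' = LB i by apply: (rroot_inj t); rewrite hr' /= s0_betaT.
  by rewrite /= eTS.
Qed.

Theorem mainTheorem2 (t : afftype)
  (* BDKT: each Lusztig datum is the right (resp. left) datum of exactly one MV polytope *)
  (BDKT_r : forall c, valid_datum c -> exists! P, isMV t P /\ cr P = c)
  (BDKT_l : forall c, valid_datum c -> exists! P, isMV t P /\ cl P = c)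
  (b : pwpoly) (hb : isMV t b) (hphi : is_phi (f0 t) b 0)
  (N : nat)
  (hN : exists n, is_phi (f0 t) (star b) n /\ n%:Z - ca0 t (wtP t (star b)) <= N%:Z)
  (x : pwpoly) (hx : iterO (e0 t) N (Some b) = Some x)
  (m : nat) (hm : is_phi (f0star t) x m)
  (S : pwpoly) (hS : iterO (f0star t) m (Some x) = Some S) :
  coef (cl S) (LT 0) = 0%N /\
  (forall r r' : rlabel, rroot t r <> alpha0 -> rroot t r' = s0 t (rroot t r) ->
     coef (cl S) r = coef (cr b) r') /\
  cD (cl S) = cD (cr b).
Proof.
have BDKT_r_ex c : valid_datum c -> exists P, isMV t P /\ cr P = c.
  by case/BDKT_r => P [hP _]; exists P.
case: b hb hphi hN hx => bL bR hb hphi [n [hn hle]] hx.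
have [hvL [hvR [ewt _]]] : valid_datum bL /\ valid_datum bR /\ wt t bL = wt t bR /\ _ := hb.
(* phi_0(b) = c^r_{alpha_0}(b) = 0 and phi_0^*(b) = n = c^l_{alpha_0}(b). *)
have hbR0 := esym (phi_f0 _ BDKT_r_ex (bL, bR) _ hvR hphi).
rewrite (phi_f0 _ BDKT_r_ex (star (bL, bR)) _ hvL hn) /wtP /= ewt in hle.
(* e_0^N b is the explicit candidate, whose alpha_0 left entry is M. *)
have ex : x = cand t bR N.
  exact: (e0_iter_unique _ _ _ _ _ BDKT_r hb hx (cand_isMV _ _ _ hb hbR0 _ hle)).
have hvx : valid_datum (cl x) by rewrite ex; exact: (valid_candL _ _ _ hb).
have hx0 : nth 0%N (cT (cl x)) 0 = M t bR N.
  by rewrite ex; exact: (nth_trimz (M t bR N :: cB bR) 0).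
have em : m = M t bR N by rewrite (phi_f0star _ BDKT_r_ex _ _ hvx hm).
(* f_0^* applied M times clears exactly that entry. *)
case: (f0star_iter _ BDKT_r_ex _ m hvx) => [|P' []]; first by rewrite hx0 em.
rewrite hS => -[<-] ->; apply: reflected_datum.
- by rewrite ex.
- by rewrite iter_dech_nth0 hx0 em subnn.
- by move=> i; rewrite iter_dech_nthS ex; exact: (nth_trimz (M t bR N :: cB bR) i.+1).
- by rewrite ex.
Qed.
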